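(* Let $(\mathcal{Y},\mathbf{h})$ be an Ingletonian polymatroid and let $0\le \epsilon\le \mathbf{h}(\mathcal{Y})$. Define $\mathbf{g}:2^{\mathcal{Y}}\to\mathbb{R}$ by $\mathbf{g}(\mathcal{A})=\min\big(\mathbf{h}(\mathcal{A}),\ \mathbf{h}(\mathcal{Y})-\epsilon\big)$ for all $\mathcal{A}\subseteq\mathcal{Y}$. Then $(\mathcal{Y},\mathbf{g})$ is also an Ingletonian polymatroid.
   Context: A polymatroid $(\mathcal{X},\mathbf{h})$ consists of a finite ground set $\mathcal{X}$ and a function $\mathbf{h}:2^{\mathcal{X}}\to\mathbb{R}_{\ge 0}$ with $\mathbf{h}(\emptyset)=0$, $\mathbf{h}(\mathcal{A})\le\mathbf{h}(\mathcal{B})$ whenever $\mathcal{A}\subseteq\mathcal{B}$, and $\mathbf{h}(\mathcal{A}\cup\mathcal{B})+\mathbf{h}(\mathcal{A}\cap\mathcal{B})\le\mathbf{h}(\mathcal{A})+\mathbf{h}(\mathcal{B})$ for all $\mathcal{A},\mathcal{B}\subseteq\mathcal{X}$. Writing concatenation for union, define for subsets $\mathcal{A}_1,\dots,\mathcal{A}_4\subseteq\mathcal{X}$ $J_{\mathbf{h}}(\mathcal{A}_1,\mathcal{A}_2,\mathcal{A}_3,\mathcal{A}_4)=\mathbf{h}(\mathcal{A}_1\mathcal{A}_2)+\mathbf{h}(\mathcal{A}_1\mathcal{A}_3)+\mathbf{h}(\mathcal{A}_1\mathcal{A}_4)+\mathbf{h}(\mathcal{A}_2\mathcal{A}_3)+\mathbf{h}(\mathcal{A}_2\mathcal{A}_4)-\mathbf{h}(\mathcal{A}_1)-\mathbf{h}(\mathcal{A}_2)-\mathbf{h}(\mathcal{A}_3\mathcal{A}_4)-\mathbf{h}(\mathcal{A}_1\mathcal{A}_2\mathcal{A}_3)-\mathbf{h}(\mathcal{A}_1\mathcal{A}_2\mathcal{A}_4)$.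 A polymatroid is Ingletonian if $J_{\mathbf{h}}(\mathcal{A}_1,\mathcal{A}_2,\mathcal{A}_3,\mathcal{A}_4)\ge 0$ for all subsets $\mathcal{A}_1,\dots,\mathcal{A}_4\subseteq\mathcal{X}$. *)

From mathcomp Require Import all_boot all_order all_algebra.
Set Implicit Arguments. Unset Strict Implicit. Unset Printing Implicit Defensive.
Import Order.TTheory GRing.Theory Num.Theory.
Local Open Scope ring_scope.

Definition polymatroid (R : realFieldType) (T : finType) (h : {set T} -> R) : Prop :=
  [/\ forall A, 0 <= h A,
      h set0 = 0,
      (forall A B : {set T}, A \subset B -> h A <= h B)
    & (forall A B : {set T}, h (A :|: B) + h (A :&: B) <= h A + h B)].

Definition Ingleton_expr (R : realFieldType) (T : finType) (h : {set T} -> R)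
  (A1 A2 A3 A4 : {set T}) : R :=
  h (A1 :|: A2) + h (A1 :|: A3) + h (A1 :|: A4) + h (A2 :|: A3) + h (A2 :|: A4)
  - h A1 - h A2 - h (A3 :|: A4) - h (A1 :|: A2 :|: A3) - h (A1 :|: A2 :|: A4).

Definition ingletonian (R : realFieldType) (T : finType) (h : {set T} -> R) : Prop :=
  polymatroid h /\
  forall A1 A2 A3 A4 : {set T}, 0 <= Ingleton_expr h A1 A2 A3 A4.

From mathcomp Require Import all_boot all_order all_algebra.
From mathcomp Require Import lra.
Set Implicit Arguments. Unset Strict Implicit. Unset Printing Implicit Defensive.
Import Order.TTheory GRing.Theory Num.Theory.
Local Open Scope ring_scope.

(* Let g := min(h, c).  If c <= h(A1 A2), then g equals c on every superset
   of A1 A2 and Shannon inequalities alone give J_g >= 0 (Ingleton_expr_ge_top).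
   If c <= h(Ai Aj) for some i in {1,2}, j in {3,4}, then g(Ai Aj) = g(A1 A2 Aj)
   and again Shannon inequalities suffice (Ingleton_expr_ge_gap).  Otherwise g
   agrees with h on all positively counted terms of J and is below h on the
   others, so J_g >= J_h >= 0. *)

Section IngletonExpr.
Variables (R : realFieldType) (T : finType) (g : {set T} -> R).
Implicit Types A B C D : {set T}.

Lemma Ingleton_exprC12 A1 A2 A3 A4 :
  Ingleton_expr g A1 A2 A3 A4 = Ingleton_expr g A2 A1 A3 A4.
Proof. rewrite /Ingleton_expr [A2 :|: A1]setUC; lra. Qed.

Lemma Ingleton_exprC34 A1 A2 A3 A4 :
  Ingleton_expr g A1 A2 A3 A4 = Ingleton_expr g A1 A2 A4 A3.
Proof. rewrite /Ingleton_expr [A4 :|: A3]setUC; lra. Qed.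

Lemma Ingleton_expr_le (h : {set T} -> R) A1 A2 A3 A4 :
  (forall A, g A <= h A) ->
  g (A1 :|: A2) = h (A1 :|: A2) -> g (A1 :|: A3) = h (A1 :|: A3) ->
  g (A1 :|: A4) = h (A1 :|: A4) -> g (A2 :|: A3) = h (A2 :|: A3) ->
  g (A2 :|: A4) = h (A2 :|: A4) ->
  Ingleton_expr h A1 A2 A3 A4 <= Ingleton_expr g A1 A2 A3 A4.
Proof.
move=> gh e12 e13 e14 e23 e24; rewrite /Ingleton_expr e12 e13 e14 e23 e24.
have := gh A1; have := gh A2; have := gh (A3 :|: A4).
have := gh (A1 :|: A2 :|: A3); have := gh (A1 :|: A2 :|: A4); lra.
Qed.

Hypothesis gP : polymatroid g.

Lemma polymatroid_submod_le A B C D :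
  D \subset A :|: B -> C \subset A :&: B -> g D + g C <= g A + g B.
Proof.
case: gP => _ _ g_mono g_submod DAB CAB.
by apply: le_trans (g_submod A B); apply: lerD; apply: g_mono.
Qed.

Lemma Ingleton_expr_ge_top A1 A2 A3 A4 :
  g (A1 :|: A2) + g (A1 :|: A2 :|: A3 :|: A4)
    - g (A1 :|: A2 :|: A3) - g (A1 :|: A2 :|: A4)
  <= Ingleton_expr g A1 A2 A3 A4.
Proof.
have s1 : g (A1 :|: A3 :|: A4) + g A1 <= g (A1 :|: A3) + g (A1 :|: A4).
  by apply: polymatroid_submod_le; apply/subsetP => x; rewrite !inE;
     case: (x \in A1); case: (x \in A3).
have s2 : g (A2 :|: A3 :|: A4) + g A2 <= g (A2 :|: A3) + g (A2 :|: A4).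
  by apply: polymatroid_submod_le; apply/subsetP => x; rewrite !inE;
     case: (x \in A2); case: (x \in A3).
have s34 : g (A1 :|: A2 :|: A3 :|: A4) + g (A3 :|: A4)
           <= g (A1 :|: A3 :|: A4) + g (A2 :|: A3 :|: A4).
  by apply: polymatroid_submod_le; apply/subsetP => x; rewrite !inE;
     case: (x \in A1); case: (x \in A2); case: (x \in A3); case: (x \in A4).
rewrite /Ingleton_expr; lra.
Qed.

Lemma Ingleton_expr_ge_gap A1 A2 A3 A4 :
  g (A1 :|: A3) - g (A1 :|: A2 :|: A3) <= Ingleton_expr g A1 A2 A3 A4.
Proof.
have s1 : g (A1 :|: A2 :|: A4) + g A1 <= g (A1 :|: A2) + g (A1 :|: A4).
  by apply: polymatroid_submod_le; apply/subsetP => x; rewrite !inE;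
     case: (x \in A1); case: (x \in A2).
have s2 : g (A3 :|: A4) + g A2 <= g (A2 :|: A3) + g (A2 :|: A4).
  by apply: polymatroid_submod_le; apply/subsetP => x; rewrite !inE;
     case: (x \in A2); case: (x \in A3).
rewrite /Ingleton_expr; lra.
Qed.

End IngletonExpr.

Section Truncation.
Variables (R : realFieldType) (T : finType) (h : {set T} -> R) (c : R).

Implicit Types A B : {set T}.

Definition truncation A : R := Num.min (h A) c.

Hypotheses (hP : polymatroid h) (c_ge0 : 0 <= c).

Lemma truncation_le A : truncation A <= h A.
Proof. by rewrite ge_min lexx. Qed.

Lemma truncation_id A : h A <= c -> truncation A = h A.
Proof. by move/min_idPl. Qed.

Lemma truncation_capped A B : A \subset B -> c <= h A -> truncation B = c.
Proof.
case: hP => _ _ h_mono _ AB cA.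
by apply/min_idPr; apply: le_trans cA (h_mono _ _ AB).
Qed.

Lemma polymatroid_truncation : polymatroid truncation.
Proof.
case: hP => h_ge0 h0 h_mono h_submod; rewrite /truncation.
split=> [A | | A B AB | A B].
- by rewrite le_min h_ge0.
- by rewrite h0; apply/min_idPl.
- by rewrite le_min !ge_min h_mono // lexx orbT.
- have := h_submod A B.
  have := h_mono _ _ (subsetIl A B); have := h_mono _ _ (subsetIr A B).
  have := h_mono _ _ (subsetUl A B); have := h_mono _ _ (subsetUr A B).
  by case: (leP (h A) c); case: (leP (h B) c);
     case: (leP (h (A :|: B)) c); case: (leP (h (A :&: B)) c); lra.
Qed.

Lemma Ingleton_expr_truncation_ge0_gap A1 A2 A3 A4 :
  c <= h (A1 :|: A3) -> 0 <= Ingleton_expr truncation A1 A2 A3 A4.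
Proof.
move=> c13; apply: le_trans (Ingleton_expr_ge_gap polymatroid_truncation _ _ _ _).
rewrite (truncation_capped (subxx _) c13) (truncation_capped _ c13) ?subrr //.
by rewrite setUAC subsetUl.
Qed.

Lemma ingletonian_truncation : ingletonian h -> ingletonian truncation.
Proof.
case=> _ hI; split=> [|A1 A2 A3 A4]; first exact: polymatroid_truncation.
case: (leP c (h (A1 :|: A2))) => [c12 | lt12].
  apply: le_trans (Ingleton_expr_ge_top polymatroid_truncation _ _ _ _).
  have capped B : A1 :|: A2 \subset B -> truncation B = c.
    by move=> sB; apply: truncation_capped sB c12.
  rewrite !capped ?subsetUl //.
    by rewrite addrK subrr.
  by rewrite -setUA subsetUl.
case: (leP c (h (A1 :|: A3))) => [c13 | lt13].
  exact: Ingleton_expr_truncation_ge0_gap.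
case: (leP c (h (A1 :|: A4))) => [c14 | lt14].
  by rewrite Ingleton_exprC34; apply: Ingleton_expr_truncation_ge0_gap.
case: (leP c (h (A2 :|: A3))) => [c23 | lt23].
  by rewrite Ingleton_exprC12; apply: Ingleton_expr_truncation_ge0_gap.
case: (leP c (h (A2 :|: A4))) => [c24 | lt24].
  by rewrite Ingleton_exprC12 Ingleton_exprC34;
     apply: Ingleton_expr_truncation_ge0_gap.
apply: le_trans (hI A1 A2 A3 A4) (Ingleton_expr_le truncation_le _ _ _ _ _);
  exact: truncation_id (ltW _).
Qed.

End Truncation.

Theorem theorem1 (R : realFieldType) (T : finType) (h : {set T} -> R) (eps : R) :
  ingletonian h -> 0 <= eps -> eps <= h [set: T] ->
  ingletonian (fun A : {set T} => Num.min (h A) (h [set: T] - eps)).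
Proof.
move=> hI _ eps_le; have [hP _] := hI.
by apply: ingletonian_truncation; rewrite // subr_ge0.
Qed.
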